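(* Let $U$ be a two-phase quantum walk with one defect. Then $U$ is unitary equivalent to \begin{align*} U_{r_+,r_-,r_0,\mu_1,\mu_2,\mu_3}={}&|e_1^{-1}\rangle\langle r_0e_1^0+e^{i\mu_1}s_0e_2^0|+|e_2^{1}\rangle\langle -e^{i\mu_2}s_0e_1^0+e^{i(\mu_1+\mu_2)}r_0e_2^0|\\ &+\sum_{n\ge1}|e_1^{n-1}\rangle\langle r_+e_1^n+s_+e_2^n|+|e_2^{n+1}\rangle\langle -e^{i\mu_3}s_+e_1^n+e^{i\mu_3}r_+e_2^n|\\ &+\sum_{n\le-1}|e_1^{n-1}\rangle\langle r_-e_1^n+s_-e_2^n|+|e_2^{n+1}\rangle\langle -s_-e_1^n+r_-e_2^n| \end{align*} for some $0\le r_+,r_-,r_0\le1$ and $\mu_1,\mu_2,\mu_3\in\mathbb R$, where $s_\varepsilon=\sqrt{1-r_\varepsilon^2}$ for $\varepsilon=+,-,0$.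
   Context: Let $\mathcal H_n=\mathbb C^2$ for $n\in\mathbb Z$, $\mathcal H=\bigoplus_{n\in\mathbb Z}\mathcal H_n$, $P_n$ the orthogonal projection onto $\mathcal H_n$, and $\{e_1^n,e_2^n\}$ the standard basis of $\mathcal H_n$; each $\mathcal H_n$ is identified with $\mathbb C^2$. Dirac notation: $|x\rangle\langle y|$ is the operator $z\mapsto\langle y,z\rangle x$ (inner product conjugate-linear in the first argument). A one-dimensional quantum walk is a unitary $U$ on $\mathcal H$ with $\operatorname{rank}(P_nUP_m)=1$ if $m=n\pm1$ and $0$ otherwise. Every such $U$ can be written as $U=\sum_{n\in\mathbb Z}|\xi_{n-1,n}\rangle\langle\zeta_{n-1,n}|+|\xi_{n+1,n}\rangle\langle\zeta_{n+1,n}|$, where $\{\xi_{n,n+1},\xi_{n+1,n}\}_{n\in\mathbb Z}$ and $\{\zeta_{n,n+1},\zeta_{n+1,n}\}_{n\in\mathbb Z}$ are orthonormal bases of $\mathcal H$ with $\xi_{n,n+1},\zeta_{n+1,n}\in\mathcal H_n$ and $\xi_{n+1,n},\zeta_{n,n+1}\in\mathcal H_{n+1}$. $U$ is a two-phase quantum walk with one defect if it has such a representation for which there exist $\xi_1^\pm,\xi_2^\pm,\zeta_1^\pm,\zeta_2^\pm\in\mathbb C^2$ with $\xi_{n,n+1}=\xi_1^+$, $\xi_{n,n-1}=\xi_2^+$, $\zeta_{n-1,n}=\zeta_1^+$, $\zeta_{n+1,n}=\zeta_2^+$ for all $n\ge1$, and $\xi_{n,n+1}=\xi_1^-$, $\xi_{n,n-1}=\xi_2^-$,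 $\zeta_{n-1,n}=\zeta_1^-$, $\zeta_{n+1,n}=\zeta_2^-$ for all $n\le-1$. Since $U$ and $e^{i\lambda}U$ are identified, unitaries $U_1,U_2$ on $\mathcal H$ are called unitary equivalent if there exist $\lambda\in\mathbb R$ and a unitary $W=\bigoplus_{n}W_n$ ($W_n$ unitary on $\mathcal H_n$) with $e^{i\lambda}WU_1W^*=U_2$. *)

From mathcomp Require Import all_boot all_algebra spectral complex.
From mathcomp Require Import reals trigo.
Set Implicit Arguments. Unset Strict Implicit. Unset Printing Implicit Defensive.
Import GRing.Theory Num.Theory.
Local Open Scope ring_scope.
Local Open Scope complex_scope.
Local Open Scope sesquilinear_scope.

(* The Hilbert space H = (+)_{n in Z} C^2.  A (bounded) operator A on H is
   represented by its block matrix: blk A n m = P_n A P_m, viewed as a 2x2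
   complex matrix (H_n and H_m identified with C^2). *)
Definition blockop (R : realType) := int -> int -> 'M[R[i]]_2.

Definition adj (R : realType) (m n : nat) (A : 'M[R[i]]_(m, n)) : 'M[R[i]]_(n, m) :=
  A ^t*.

Definition ketbra (R : realType) (x y : 'cV[R[i]]_2) : 'M[R[i]]_2 := x *m adj y.

(* inner product, conjugate-linear in the first argument: <x,y> = x^* y *)
Definition dotc (R : realType) (x y : 'cV[R[i]]_2) : R[i] := (adj x *m y) 0 0.

Definition e1 (R : realType) : 'cV[R[i]]_2 := delta_mx 0 0.
Definition e2 (R : realType) : 'cV[R[i]]_2 := delta_mx 1 0.

Definition cv2 (R : realType) (a b : R[i]) : 'cV[R[i]]_2 := a *: e1 R + b *: e2 R.

Definition expi (R : realType) (mu : R) : R[i] := (cos mu +i* sin mu).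

Definition RC (R : realType) (x : R) : R[i] := x%:C.

Definition onb2 (R : realType) (x y : 'cV[R[i]]_2) : Prop :=
  [/\ dotc x x = 1, dotc y y = 1 & dotc x y = 0].

(* Because of the band structure, U U^* and U^* U have finite block sums:
   (U^* U)_{n,m} = sum_k U_{k,n}^* U_{k,m}, with k ranging over n-1, n+1.
   Blocks bounded by 1 (consequence of these identities) plus the band
   structure make U a bounded operator, so this is exactly unitarity. *)
Definition is_qw (R : realType) (U : blockop R) : Prop :=
  [/\ (forall n m : int, \rank (U n m) = (if (m == n + 1) || (m == n - 1) then 1%N else 0%N)),
      (forall n m : int,
         adj (U (n - 1) n) *m U (n - 1) m + adj (U (n + 1) n) *m U (n + 1) m
         = (if n == m then 1%:M else 0))
    & (forall n m : int,
         U n (n - 1) *m adj (U m (n - 1)) + U n (n + 1) *m adj (U m (n + 1))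
         = (if n == m then 1%:M else 0))].

(* U = sum_n |xi_{n-1,n}><zeta_{n-1,n}| + |xi_{n+1,n}><zeta_{n+1,n}|, with
   xi_{a,b} in H_a and zeta_{a,b} in H_b; {xi_{n,n+1}, xi_{n,n-1}} and
   {zeta_{n-1,n}, zeta_{n+1,n}} orthonormal bases of H_n (so that the
   families form orthonormal bases of H).  Only the entries xi a b, zeta a b
   with |a - b| = 1 are meaningful. *)
Definition qw_repr (R : realType) (U : blockop R)
    (xi zeta : int -> int -> 'cV[R[i]]_2) : Prop :=
  [/\ (forall n : int, onb2 (xi n (n + 1)) (xi n (n - 1))),
      (forall n : int, onb2 (zeta (n - 1) n) (zeta (n + 1) n))
    & (forall n m : int, U n m =
         (if n == m - 1 then ketbra (xi (m - 1) m) (zeta (m - 1) m)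
          else if n == m + 1 then ketbra (xi (m + 1) m) (zeta (m + 1) m)
          else 0))].

Definition two_phase_one_defect (R : realType) (U : blockop R) : Prop :=
  is_qw U /\
  exists (xi zeta : int -> int -> 'cV[R[i]]_2)
         (xi1p xi2p zeta1p zeta2p xi1m xi2m zeta1m zeta2m : 'cV[R[i]]_2),
    [/\ qw_repr U xi zeta,
        (forall n : int, 1 <= n ->
           [/\ xi n (n + 1) = xi1p, xi n (n - 1) = xi2p,
               zeta (n - 1) n = zeta1p & zeta (n + 1) n = zeta2p])
      & (forall n : int, n <= -1 ->
           [/\ xi n (n + 1) = xi1m, xi n (n - 1) = xi2m,
               zeta (n - 1) n = zeta1m & zeta (n + 1) n = zeta2m])].

(* Unitary equivalence up to a global phase: e^{i lambda} W U1 W^* = U2 with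
   W = (+)_n W_n, W_n unitary on H_n. *)
Definition unitary_equiv (R : realType) (U1 U2 : blockop R) : Prop :=
  exists (lambda : R) (W : int -> 'M[R[i]]_2),
    (forall n : int, W n \is unitarymx) /\
    (forall n m : int, expi lambda *: (W n *m U1 n m *m adj (W m)) = U2 n m).

Definition Unf (R : realType) (rp rm r0 mu1 mu2 mu3 : R) : blockop R :=
  let sp := Num.sqrt (1 - rp ^+ 2) in
  let sm := Num.sqrt (1 - rm ^+ 2) in
  let s0 := Num.sqrt (1 - r0 ^+ 2) in
  fun n m =>
    if m == 0 then
      (if n == -1 then ketbra (e1 R) (cv2 (RC r0) (expi mu1 * RC s0))
       else if n == 1 then ketbra (e2 R) (cv2 (- (expi mu2 * RC s0)) (expi (mu1 + mu2) * RC r0))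
       else 0)
    else if 1 <= m then
      (if n == m - 1 then ketbra (e1 R) (cv2 (RC rp) (RC sp))
       else if n == m + 1 then ketbra (e2 R) (cv2 (- (expi mu3 * RC sp)) (expi mu3 * RC rp))
       else 0)
    else
      (if n == m - 1 then ketbra (e1 R) (cv2 (RC rm) (RC sm))
       else if n == m + 1 then ketbra (e2 R) (cv2 (- RC sm) (RC rm))
       else 0).

(* Write U = sum |xi><zeta| and let (a_m, b_m) and (c_m, d_m) be the
   coordinates of zeta_{m-1,m} and zeta_{m+1,m} in the basis {xi_{m,m+1},
   xi_{m,m-1}}; this 2x2 matrix is unitary, so c_m = - det_m b_m^* and
   d_m = det_m a_m^*.  The diagonal gauge W_m sending xi_{m,m+1} to al_m e_1 and
   xi_{m,m-1} to be_m e_2 turns column m of e^{i lam} W U W^* into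
   |e_1><(r_m, t_m)| + |e_2><(- k_m t_m^*, k_m r_m)|.  Choosing
   al_m = al_{m-1} e^{i lam} phase(a_m)^* (a product over Z) makes r_m = |a_m|,
   letting be_m cancel the phase of b in each half-line makes t_m = |b_m| off the
   defect, and e^{2 i lam} = det_{-1} makes k_m = 1 on the left.  Since the
   coefficients are constant on each half-line, the phases left over are the
   three constants mu1, mu2, mu3. *)

From mathcomp Require Import all_boot all_algebra spectral complex.
From mathcomp Require Import reals trigo.
From mathcomp Require Import ring lra order zify.
Set Implicit Arguments. Unset Strict Implicit. Unset Printing Implicit Defensive.
Import Order.TTheory GRing.Theory Num.Theory.
Local Open Scope ring_scope.

Section Phase.
Variable R : realType.
Local Notation C := R[i].
Implicit Types (a b z : C) (mu nu : R).

Definition unimodular z := z * z^* = 1.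

Lemma unimodularM a b : unimodular a -> unimodular b -> unimodular (a * b).
Proof.
rewrite /unimodular rmorphM => ha hb.
by rewrite mulrACA ha hb mulr1.
Qed.

Lemma unimodularJ z : unimodular z -> unimodular z^*.
Proof. by rewrite /unimodular conjCK mulrC. Qed.

Lemma unimodularX z n : unimodular z -> unimodular (z ^+ n).
Proof. by rewrite /unimodular rmorphXn -exprMn => ->; rewrite expr1n. Qed.

Lemma unimodularJK z : unimodular z -> z^* * z = 1.
Proof. by rewrite mulrC. Qed.

Lemma unimodular_neq0 z : unimodular z -> z != 0.
Proof. by apply: contra_eqN => /eqP ->; rewrite mul0r eq_sym oner_eq0. Qed.

Lemma unimodular_conj z : unimodular z -> z^* = z^-1.
Proof. by move=> hz; rewrite -[z^*]mul1r -(mulVf (unimodular_neq0 hz)) -mulrA hz mulr1. Qed.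

Lemma expiD mu nu : expi mu * expi nu = expi (mu + nu).
Proof. by rewrite /expi cosD sinD; simpc; congr Complex; ring. Qed.

Lemma expi_unimodular mu : unimodular (expi mu).
Proof.
rewrite /unimodular /expi; simpc.
by rewrite -!expr2 cos2Dsin2; congr Complex; ring.
Qed.

Lemma unimodular_expi z : unimodular z -> exists mu, expi mu = z.
Proof.
case: z => a b; rewrite /unimodular; simpc => -[h1 _].
have ha : -1 <= a <= 1.
  have : a ^+ 2 <= 1 by rewrite -h1 expr2 lerDl -expr2 sqr_ge0.
  by move=> h; apply/andP; split; nra.
have hs : Num.sqrt (1 - a ^+ 2) = `|b|.
  by rewrite -h1 (addrC (a * a)) expr2 addrK -expr2 sqrtr_sqr.
have [/acos_def [_ ca]] := (ha, ha).
have [hb | hb] := leP 0 b.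
  by exists (acos a); rewrite /expi ca sin_acos // hs ger0_norm.
by exists (- acos a); rewrite /expi cosN sinN ca sin_acos // hs ltr0_norm // opprK.
Qed.

Lemma unimodular_sqrt_expi z : unimodular z -> exists mu, expi mu * expi mu = z.
Proof. by move/unimodular_expi=> [mu <-]; exists (mu / 2); rewrite expiD -splitr. Qed.

Definition phase z := if z == 0 then 1 else z / `|z|.

Lemma phase_unimodular z : unimodular (phase z).
Proof.
rewrite /unimodular /phase; case: eqP => [_|/eqP hz]; first by rewrite rmorph1 mulr1.
rewrite rmorphM rmorphV ?unitfE ?normr_eq0 //= conj_normC.
by rewrite mulrACA -normCK -invfM -expr2 mulfV // expf_neq0 // normr_eq0.
Qed.

Lemma phase_polar z : z = phase z * `|z|.
Proof.
rewrite /phase; case: eqP => [->|/eqP hz]; first by rewrite normr0 mulr0.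
by rewrite mulfVK // normr_eq0.
Qed.

Lemma phaseJ_mul z : (phase z)^* * z = `|z|.
Proof.
rewrite {2}[z]phase_polar mulrA unimodularJK ?mul1r //.
exact: phase_unimodular.
Qed.

Lemma phase_mulJ z : phase z * z^* = `|z|.
Proof. by rewrite -[phase z]conjCK -rmorphM /= phaseJ_mul conj_normC. Qed.

Lemma conj_RC (x : R) : (RC x)^* = RC x.
Proof. exact: conjc_real. Qed.

Lemma RC_Re_norm z : RC (complex.Re `|z|) = `|z|.
Proof. by rewrite /RC RRe_real // normr_real. Qed.

Lemma Re_norm_ge0 z : 0 <= complex.Re `|z|.
Proof. by rewrite -(@ler0c R) -[X in _ <= X]/(RC _) RC_Re_norm. Qed.

Lemma Re_norm_sqrD a b : a^* * a + b^* * b = 1 ->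
  complex.Re `|a| ^+ 2 + complex.Re `|b| ^+ 2 = 1.
Proof.
move=> h; apply: (@complexI R).
rewrite -[X in X = _]/(RC _) /RC rmorphD !rmorphXn /= -!/(RC _) !RC_Re_norm.
by rewrite !normCKC h.
Qed.

Lemma Re_norm_le1 a b : a^* * a + b^* * b = 1 -> 0 <= complex.Re `|a| <= 1.
Proof.
move=> /Re_norm_sqrD h; have := Re_norm_ge0 a; have := Re_norm_ge0 b.
by move=> hb ha; apply/andP; split => //; nra.
Qed.

Lemma sqrt_1_sub_Re_norm a b : a^* * a + b^* * b = 1 ->
  Num.sqrt (1 - complex.Re `|a| ^+ 2) = complex.Re `|b|.
Proof.
move=> /Re_norm_sqrD <-; rewrite addrAC subrr add0r sqrtr_sqr ger0_norm //.
exact: Re_norm_ge0.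
Qed.

End Phase.

Section KetBra.
Variable R : realType.
Local Notation C := R[i].
Implicit Types (x y z w : 'cV[C]_2) (a b c d : C).

Lemma adjM m n p (A : 'M[C]_(m, n)) (B : 'M[C]_(n, p)) : adj (A *m B) = adj B *m adj A.
Proof. by rewrite /adj trmx_mul map_mxM. Qed.

Lemma adjZ m n c (A : 'M[C]_(m, n)) : adj (c *: A) = c^* *: adj A.
Proof. by apply/matrixP=> i j; rewrite !mxE rmorphM. Qed.

Lemma adjD m n (A B : 'M[C]_(m, n)) : adj (A + B) = adj A + adj B.
Proof. by apply/matrixP=> i j; rewrite !mxE rmorphD. Qed.

Lemma adjK m n (A : 'M[C]_(m, n)) : adj (adj A) = A.
Proof. exact: trmxCK. Qed.

Lemma dotcE x y : adj x *m y = (dotc x y)%:M.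
Proof. exact: mx11_scalar. Qed.

Lemma dotcC x y : dotc y x = (dotc x y)^*.
Proof. by rewrite /dotc -[adj y *m x]adjK adjM adjK !mxE. Qed.

Lemma dotcDl x y z : dotc (y + z) x = dotc y x + dotc z x.
Proof. by rewrite /dotc adjD mulmxDl mxE. Qed.

Lemma dotcDr x y z : dotc x (y + z) = dotc x y + dotc x z.
Proof. by rewrite /dotc mulmxDr mxE. Qed.

Lemma dotcZl c x y : dotc (c *: x) y = c^* * dotc x y.
Proof. by rewrite /dotc adjZ -scalemxAl mxE. Qed.

Lemma dotcZr c x y : dotc x (c *: y) = c * dotc x y.
Proof. by rewrite /dotc -scalemxAr mxE. Qed.

Lemma ketbra_mulmx x y z : ketbra x y *m z = dotc y z *: x.
Proof. by rewrite /ketbra -mulmxA dotcE mul_mx_scalar. Qed.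

Lemma ketbra_mul x y z w : ketbra x y *m ketbra z w = dotc y z *: ketbra x w.
Proof. by rewrite {1}/ketbra mulmxA ketbra_mulmx /ketbra scalemxAl. Qed.

Lemma ketbraZl c x y : ketbra (c *: x) y = ketbra x (c^* *: y).
Proof. by rewrite /ketbra adjZ -scalemxAl -scalemxAr conjCK. Qed.

Lemma ketbraZr c x y : ketbra x (c *: y) = c^* *: ketbra x y.
Proof. by rewrite /ketbra adjZ -scalemxAr. Qed.

Lemma adj_ketbra x y : adj (ketbra x y) = ketbra y x.
Proof. by rewrite /ketbra adjM adjK. Qed.

Lemma mulmx_ketbra_adj (V W : 'M[C]_2) x y :
  V *m ketbra x y *m adj W = ketbra (V *m x) (W *m y).
Proof. by rewrite /ketbra adjM !mulmxA. Qed.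

Lemma scale_ketbra c d x y : c *: ketbra (d *: x) y = ketbra x ((c * d)^* *: y).
Proof. by rewrite ketbraZl !ketbraZr !conjCK scalerA. Qed.

Lemma scale_cv2 c a b : c *: cv2 a b = cv2 (c * a) (c * b).
Proof. by rewrite /cv2 scalerDr !scalerA. Qed.

Lemma onb2_e : onb2 (e1 R) (e2 R).
Proof.
by split; rewrite /dotc /adj /e1 /e2 !mxE big_ord_recl big_ord1 !mxE /= ?rmorph0 ?rmorph1;
  rewrite ?mulr0 ?mulr1 ?addr0 ?add0r.
Qed.

Lemma onb2_sym x y : onb2 x y -> onb2 y x.
Proof. by case=> hx hy hxy; split; rewrite // dotcC hxy rmorph0. Qed.

Lemma onb2_complete x y : onb2 x y -> ketbra x x + ketbra y y = 1%:M.
Proof.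
case=> hx hy hxy.
pose X : 'M[C]_(2, 1 + 1) := row_mx x y.
have adjX : adj X = col_mx (adj x) (adj y) by rewrite /adj tr_row_mx map_col_mx.
have : adj X *m X = 1%:M.
  rewrite adjX mul_col_row !dotcE hx hy hxy [dotc y x]dotcC hxy conjC0.
  by rewrite (_ : 0%:M = 0) ?raddf0 // -scalar_mx_block.
by move/mulmx1C; rewrite adjX mul_row_col.
Qed.

Lemma onb2_expand x y z : onb2 x y -> z = dotc x z *: x + dotc y z *: y.
Proof. by move=> hxy; rewrite -[z in LHS]mul1mx -(onb2_complete hxy) mulmxDl !ketbra_mulmx. Qed.

Lemma onb2_dotc x y z w : onb2 x y ->
  dotc z w = (dotc x z)^* * dotc x w + (dotc y z)^* * dotc y w.
Proof.
move=> hxy; rewrite [in LHS](onb2_expand z hxy) [in LHS](onb2_expand w hxy).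
case: hxy (onb2_sym hxy) => hx hy hxy [_ _ hyx].
rewrite !dotcDl !dotcZl !dotcDr !dotcZr hx hy hxy hyx; ring.
Qed.

End KetBra.

Section ChangeOfBasis.
Variable R : realType.
Local Notation C := R[i].
Implicit Types (x y z : 'cV[C]_2) (a b c d : C).

Lemma unitary2_col2 a b c d :
  a^* * a + b^* * b = 1 -> c^* * c + d^* * d = 1 -> a^* * c + b^* * d = 0 ->
  [/\ c = - ((a * d - b * c) * b^*), d = (a * d - b * c) * a^*
    & unimodular (a * d - b * c)].
Proof.
move=> ha hc hac.
have ec : c = - ((a * d - b * c) * b^*).
  apply/eqP; rewrite -subr_eq0 opprK.
  suff -> : c + (a * d - b * c) * b^* = a * (a^* * c + b^* * d) - c * (a^* * a + b^* * b - 1).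
    by rewrite ha hac subrr !mulr0 subrr.
  by ring.
have ed : d = (a * d - b * c) * a^*.
  apply/eqP; rewrite -subr_eq0.
  suff -> : d - (a * d - b * c) * a^* = b * (a^* * c + b^* * d) - d * (a^* * a + b^* * b - 1).
    by rewrite ha hac subrr !mulr0 subrr.
  by ring.
split=> //; set del := a * d - b * c in ec ed *.
move: hc; rewrite ec ed rmorphN !rmorphM /= !conjCK => hc.
rewrite /unimodular -hc -[LHS]mulr1 -ha; ring.
Qed.

Lemma onb2_dotc_unitary x1 x2 z1 z2 : onb2 x1 x2 -> onb2 z1 z2 ->
  [/\ (dotc x1 z1)^* * dotc x1 z1 + (dotc x2 z1)^* * dotc x2 z1 = 1,
      (dotc x1 z2)^* * dotc x1 z2 + (dotc x2 z2)^* * dotc x2 z2 = 1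
    & (dotc x1 z1)^* * dotc x1 z2 + (dotc x2 z1)^* * dotc x2 z2 = 0].
Proof. by move=> hx [h1 h2 h12]; rewrite -!(onb2_dotc _ _ hx) h1 h2 h12. Qed.

Definition gauge a b x y : 'M[C]_2 := ketbra (a *: e1 R) x + ketbra (b *: e2 R) y.

Lemma gauge_mulmx a b x y z : gauge a b x y *m z = cv2 (a * dotc x z) (b * dotc y z).
Proof. by rewrite mulmxDl !ketbra_mulmx !scalerA /cv2 ![dotc _ z * _]mulrC. Qed.

Lemma gauge_mulmx1 a b x y : onb2 x y -> gauge a b x y *m x = a *: e1 R.
Proof.
case=> hx _ hxy; rewrite gauge_mulmx hx [dotc y x]dotcC hxy conjC0 /cv2.
by rewrite mulr0 mulr1 scale0r addr0.
Qed.

Lemma gauge_mulmx2 a b x y : onb2 x y -> gauge a b x y *m y = b *: e2 R.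
Proof. by case=> _ hy hxy; rewrite gauge_mulmx hy hxy /cv2 mulr0 mulr1 scale0r add0r. Qed.

Lemma gauge_unitary a b x y : unimodular a -> unimodular b -> onb2 x y ->
  gauge a b x y \is unitarymx.
Proof.
move=> ha hb hxy; have [hx hy hxy'] := hxy; have [_ _ hyx] := onb2_sym hxy.
apply/unitarymxP; rewrite -/(adj _) adjD !adj_ketbra mulmxDl !mulmxDr !ketbra_mul.
rewrite hx hy hxy' hyx !scale0r addr0 add0r !scale1r !ketbraZl !ketbraZr !scalerA.
by rewrite !conjCK ha hb !scale1r (onb2_complete (onb2_e R)).
Qed.

End ChangeOfBasis.

Section Walks.
Variable R : realType.
Local Notation C := R[i].

Lemma cumprod_int (f : int -> C) : (forall m, unimodular (f m)) ->
  exists al : int -> C, (forall m, unimodular (al m)) /\ forall m, al m = al (m - 1) * f m.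
Proof.
move=> hf.
pose al m := match m with
  | Posz k => \prod_(1 <= i < k.+1) f i
  | Negz k => \prod_(i < k.+1) (f (- i%:Z))^* end.
have unimodular1 : unimodular (1 : C) by rewrite /unimodular rmorph1 mulr1.
exists al; split.
  case=> k; apply: big_ind => //; try exact: unimodularM.
  by move=> i _; apply: unimodularJ.
case=> [[|k]|k].
- by rewrite /al /= big_ord1 big_geq //; symmetry; apply: unimodularJK.
- have -> : k.+1%:Z - 1 = k by lia.
  by rewrite /al big_nat_recr.
- have -> : Negz k - 1 = Negz k.+1 by lia.
  by rewrite /al [in RHS]big_ord_recr /= -mulrA NegzE unimodularJK ?mulr1.
Qed.

Definition by_region (T : Type) (x0 xp xm : T) (m : int) : T :=
  if m == 0 then x0 else if 1 <= m then xp else xm.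

Lemma by_regionP (T : Type) (x0 xp xm : T) (P : T -> int -> Prop) m :
  (m = 0 -> P x0 0) -> (1 <= m -> P xp m) -> (m <= -1 -> P xm m) ->
  P (by_region x0 xp xm m) m.
Proof.
rewrite /by_region; case: eqP => [-> h0 _ _ | /eqP m0 _]; first exact: h0.
by case: ifP => hm hp hn; [exact: hp | apply: hn; lia].
Qed.

(* Column m of a 2x2 unitary whose first entry is real and nonnegative has the
   form (r, t), (- k t^*, k r) with k unimodular. *)
Definition std_walk (r : int -> R) (t k : int -> C) : blockop R := fun n m =>
  if n == m - 1 then ketbra (e1 R) (cv2 (RC (r m)) (t m))
  else if n == m + 1 then ketbra (e2 R) (cv2 (- (k m * (t m)^*)) (k m * RC (r m)))
  else 0.

Lemma std_walk_col r r' t t' k k' n m : r m = r' m -> t m = t' m -> k m = k' m ->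
  std_walk r t k n m = std_walk r' t' k' n m.
Proof. by rewrite /std_walk => -> -> ->. Qed.

Definition compl_radius (r : R) := Num.sqrt (1 - r ^+ 2).

Lemma Unf_std_walk rp rm r0 mu1 mu2 mu3 n m :
  Unf rp rm r0 mu1 mu2 mu3 n m =
  std_walk (by_region r0 rp rm)
    (by_region (expi mu1 * RC (compl_radius r0)) (RC (compl_radius rp))
       (RC (compl_radius rm)))
    (by_region (expi (mu1 + mu2)) (expi mu3) 1) n m.
Proof.
rewrite /Unf /std_walk /by_region /compl_radius; case: eqP => [-> | _]; last first.
  by case: ifP => _; rewrite ?mul1r conj_RC.
have expi_mu2 : expi (mu1 + mu2) * (expi mu1)^* = expi mu2.
  by rewrite -expiD mulrAC expi_unimodular mul1r.
by rewrite sub0r add0r rmorphM /= conj_RC mulrA expi_mu2.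
Qed.

End Walks.

Section GaugeWalk.
Variable R : realType.
Local Notation C := R[i].
Variables (U : blockop R) (xi zeta : int -> int -> 'cV[C]_2).

Definition coef_a m := dotc (xi m (m + 1)) (zeta (m - 1) m).
Definition coef_b m := dotc (xi m (m - 1)) (zeta (m - 1) m).
Definition coef_c m := dotc (xi m (m + 1)) (zeta (m + 1) m).
Definition coef_d m := dotc (xi m (m - 1)) (zeta (m + 1) m).
Definition coef_det m := coef_a m * coef_d m - coef_b m * coef_c m.

Lemma coef_eq_on (P : int -> Prop) (x1 x2 z1 z2 : 'cV[C]_2) (m0 : int) :
  (forall n, P n -> [/\ xi n (n + 1) = x1, xi n (n - 1) = x2,
                       zeta (n - 1) n = z1 & zeta (n + 1) n = z2]) ->
  P m0 -> forall m, P m ->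
  [/\ coef_a m = coef_a m0, coef_b m = coef_b m0 & coef_det m = coef_det m0].
Proof.
move=> hP h0 m hm; rewrite /coef_det /coef_a /coef_b /coef_c /coef_d.
by case: (hP m hm) (hP m0 h0) => -> -> -> -> [-> -> -> ->].
Qed.

Hypothesis repr : qw_repr U xi zeta.

Lemma coef_unitary m :
  [/\ (coef_a m)^* * coef_a m + (coef_b m)^* * coef_b m = 1,
      coef_c m = - (coef_det m * (coef_b m)^*),
      coef_d m = coef_det m * (coef_a m)^* & unimodular (coef_det m)].
Proof.
have [hxi hzeta _] := repr.
have [h1 h2 h12] := onb2_dotc_unitary (hxi m) (hzeta m).
by have [] := unitary2_col2 h1 h2 h12.
Qed.

Variables (lam : R) (q al : int -> C).
Hypotheses (q_unimodular : forall m, unimodular (q m))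
  (al_unimodular : forall m, unimodular (al m))
  (al_rec : forall m, al m = al (m - 1) * (expi lam * (phase (coef_a m))^*)).

Definition walk_gauge n :=
  gauge (al n) (expi lam * al (n - 1) * (q n)^*) (xi n (n + 1)) (xi n (n - 1)).

Lemma walk_gauge_unitary n : walk_gauge n \is unitarymx.
Proof.
have [hxi _ _] := repr.
apply: gauge_unitary (hxi n) => //.
apply: unimodularM; last exact: unimodularJ.
by apply: unimodularM => //; exact: expi_unimodular.
Qed.

Lemma walk_gauge_conj n m :
  expi lam *: (walk_gauge n *m U n m *m adj (walk_gauge m)) =
  std_walk (fun m => complex.Re `|coef_a m|) (fun m => (q m)^* * coef_b m)
    (fun m => (expi lam)^* ^+ 2 * coef_det m * q (m + 1) * (q m)^*) n m.
Proof.
have [hxi _ ->] := repr; rewrite /std_walk.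
have [_ hc hd _] := coef_unitary m.
(* All phases are unimodular: once their conjugates are rewritten as inverses,
   each entry of the column is a rational identity. *)
have conj_L := unimodular_conj (expi_unimodular lam).
have conj_al k := unimodular_conj (al_unimodular k).
have conj_q k := unimodular_conj (q_unimodular k).
have conj_phase (z : C) := unimodular_conj (phase_unimodular z).
have nz_L := unimodular_neq0 (expi_unimodular lam).
have nz_al k := unimodular_neq0 (al_unimodular k).
have nz_q k := unimodular_neq0 (q_unimodular k).
have nz_phase (z : C) := unimodular_neq0 (phase_unimodular z).
case: eqP => [-> | _].
  rewrite mulmx_ketbra_adj {1}/walk_gauge subrK gauge_mulmx1; last first.
    by have := hxi (m - 1); rewrite subrK.
  rewrite scale_ketbra gauge_mulmx scale_cv2 -/(coef_a m) -/(coef_b m).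
  rewrite RC_Re_norm -phaseJ_mul [al m]al_rec.
  by congr (ketbra _ (cv2 _ _)); rewrite !rmorphM /= ?conj_L ?conj_al ?conj_q ?conj_phase;
    field; rewrite ?nz_L ?nz_al ?nz_q ?nz_phase.
case: eqP => [-> | _]; last by rewrite mulmx0 mul0mx scaler0.
rewrite mulmx_ketbra_adj {1}/walk_gauge addrK gauge_mulmx2; last first.
  by have := hxi (m + 1); rewrite addrK.
rewrite scale_ketbra gauge_mulmx scale_cv2 -/(coef_c m) -/(coef_d m) hc hd.
rewrite RC_Re_norm -phase_mulJ [al m]al_rec.
by congr (ketbra _ (cv2 _ _)); rewrite !(rmorphM, rmorphN) /= !conjCK
  ?conj_L ?conj_al ?conj_q ?conj_phase; field; rewrite ?nz_L ?nz_al ?nz_q ?nz_phase.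
Qed.

End GaugeWalk.

Section NormalFormPhases.
Variable R : realType.
Local Notation C := R[i].
Variables (a b det : int -> C) (lam : R).
Hypotheses (coef_pos : forall m, 1 <= m -> [/\ a m = a 1, b m = b 1 & det m = det 1])
  (coef_neg : forall m, m <= -1 -> [/\ a m = a (-1), b m = b (-1) & det m = det (-1)])
  (col_unit : forall m, (a m)^* * a m + (b m)^* * b m = 1)
  (det_unimodular : forall m, unimodular (det m))
  (lam_det : expi lam * expi lam = det (-1)).

Definition region_phase (m : int) := phase (b (if 1 <= m then 1 else -1)).

Local Notation radius m := (complex.Re `|a m|).

Lemma region_radius m : radius m = by_region (radius 0) (radius 1) (radius (-1)) m.
Proof.
apply: (by_regionP (P := fun r m => radius m = r)) => // hm.
  by have [ea _ _] := coef_pos hm; rewrite ea.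
by have [ea _ _] := coef_neg hm; rewrite ea.
Qed.

Lemma region_compl_radius m : RC (compl_radius (radius m)) = `|b m|.
Proof. by rewrite /compl_radius (sqrt_1_sub_Re_norm (col_unit m)) RC_Re_norm. Qed.

Lemma region_phase_pos m : 1 <= m -> region_phase m = phase (b 1).
Proof. by rewrite /region_phase => ->. Qed.

Lemma region_phase_npos m : m <= 0 -> region_phase m = phase (b (-1)).
Proof. by rewrite /region_phase => hm; case: ifP => //; lia. Qed.

Lemma region_coef_t mu1 : expi mu1 = (phase (b (-1)))^* * phase (b 0) ->
  forall m, (region_phase m)^* * b m =
  by_region (expi mu1 * RC (compl_radius (radius 0))) (RC (compl_radius (radius 1)))
    (RC (compl_radius (radius (-1)))) m.
Proof.
move=> hmu1 m; apply: (by_regionP (P := fun t m => (region_phase m)^* * b m = t)).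
- by rewrite region_phase_npos // region_compl_radius {1}[b 0]phase_polar mulrA hmu1.
- move=> hm; have [_ eb _] := coef_pos hm.
  by rewrite region_phase_pos // eb phaseJ_mul region_compl_radius.
- move=> hm; have [_ eb _] := coef_neg hm.
  by rewrite region_phase_npos ?eb ?phaseJ_mul ?region_compl_radius //; lia.
Qed.

Lemma region_coef_k mu12 mu3 :
  expi mu12 = (expi lam)^* ^+ 2 * det 0 * region_phase 1 * (region_phase 0)^* ->
  expi mu3 = (expi lam)^* ^+ 2 * det 1 ->
  forall m, (expi lam)^* ^+ 2 * det m * region_phase (m + 1) * (region_phase m)^* =
  by_region (expi mu12) (expi mu3) 1 m.
Proof.
move=> hmu12 hmu3 m.
apply: (by_regionP (P := fun k m => _ * det m * region_phase (m + 1) * _ = k)) => // hm.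
  have [_ _ ed] := coef_pos hm.
  rewrite !region_phase_pos ?ed -?hmu3; try lia.
  by rewrite -mulrA phase_unimodular mulr1.
have [_ _ ed] := coef_neg hm.
rewrite !region_phase_npos ?ed; try lia.
rewrite -mulrA phase_unimodular mulr1 -lam_det -expr2 -exprMn.
by rewrite unimodularJK ?expr1n //; apply: expi_unimodular.
Qed.

Lemma region_coefs : exists mu1 mu2 mu3, forall m,
  [/\ radius m = by_region (radius 0) (radius 1) (radius (-1)) m,
      (region_phase m)^* * b m =
        by_region (expi mu1 * RC (compl_radius (radius 0)))
          (RC (compl_radius (radius 1))) (RC (compl_radius (radius (-1)))) m
    & (expi lam)^* ^+ 2 * det m * region_phase (m + 1) * (region_phase m)^* =
        by_region (expi (mu1 + mu2)) (expi mu3) 1 m].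
Proof.
have L2_unimodular : unimodular ((expi lam)^* ^+ 2).
  exact/unimodularX/unimodularJ/expi_unimodular.
have [mu1 hmu1] : exists mu1, expi mu1 = (phase (b (-1)))^* * phase (b 0).
  by apply/unimodular_expi/unimodularM; [apply: unimodularJ|]; apply: phase_unimodular.
have [nu hnu] :
    exists nu, expi nu = (expi lam)^* ^+ 2 * det 0 * region_phase 1 * (region_phase 0)^*.
  apply/unimodular_expi/unimodularM; last exact/unimodularJ/phase_unimodular.
  by apply: unimodularM; [exact: unimodularM | exact: phase_unimodular].
have [mu3 hmu3] : exists mu3, expi mu3 = (expi lam)^* ^+ 2 * det 1.
  exact/unimodular_expi/unimodularM.
exists mu1, (nu - mu1), mu3 => m; split.
- exact: region_radius.
- exact: region_coef_t.
- by apply: (region_coef_k _ hmu3); rewrite addrC subrK.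
Qed.

End NormalFormPhases.

Theorem theorem2p7 (R : realType) (U : blockop R) :
  two_phase_one_defect U ->
  exists (rp rm r0 mu1 mu2 mu3 : R),
    [/\ 0 <= rp <= 1, 0 <= rm <= 1, 0 <= r0 <= 1
      & unitary_equiv U (Unf rp rm r0 mu1 mu2 mu3)].
Proof.
case=> _ [xi [zeta [xi1p [xi2p [zeta1p [zeta2p [xi1m [xi2m [zeta1m [zeta2m]]]]]]]]]].
case=> repr hpos hneg.
set a := coef_a xi zeta; set b := coef_b xi zeta; set det := coef_det xi zeta.
have col_unit m : (a m)^* * a m + (b m)^* * b m = 1 by case: (coef_unitary repr m).
have det_unimodular m : unimodular (det m) by case: (coef_unitary repr m).
have coef_pos := coef_eq_on hpos (lexx 1).
have coef_neg := coef_eq_on hneg (lexx (-1)).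
have [lam lam_det] := unimodular_sqrt_expi (det_unimodular (-1)).
have [mu1 [mu2 [mu3 coefs]]] := region_coefs coef_pos coef_neg col_unit det_unimodular lam_det.
pose q := region_phase b; have q_unimodular m : unimodular (q m) := phase_unimodular _.
have [|al [al_unimodular al_rec]] := @cumprod_int R (fun m => expi lam * (phase (a m))^*).
  by move=> m; apply: unimodularM; [exact: expi_unimodular | exact/unimodularJ/phase_unimodular].
exists (complex.Re `|a 1|), (complex.Re `|a (-1)|), (complex.Re `|a 0|), mu1, mu2, mu3.
split; try exact: Re_norm_le1 (col_unit _).
exists lam, (walk_gauge xi lam q al); split => [n | n m].
  exact (walk_gauge_unitary repr lam q_unimodular al_unimodular n).
rewrite (walk_gauge_conj repr q_unimodular al_unimodular al_rec) Unf_std_walk.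
by have [] := coefs m; apply: std_walk_col.
Qed.
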